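(* Assume $p_{i,n}\ge0$ for all $n$ and $i$. Let $\xi_1,\xi_2,\dots$ be independent random variables with $\xi_n\in\{0,1,\dots,m_n\}$ and $\mathbb P\{\xi_n=i\}=p_{i,n}$, and let $\eta=\Delta^{\tilde Q}_{\xi_1\xi_2\dots\xi_n\dots}$. Then the distribution function $F_\eta(x)=\mathbb P\{\eta<x\}$ is $$F_\eta(x)=\begin{cases}0,& x<0,\\ \beta_{i_1(x),1}+\sum_{n=2}^{\infty}\Big[\tilde\beta_{i_n(x),n}\prod_{j=1}^{n-1}\tilde p_{i_j(x),j}\Big],& 0\le x<1,\\ 1,& x\ge1,\end{cases}$$ where $x=\Delta^{-\tilde Q}_{i_1(x)i_2(x)\dots}$.
   Context: Let $(m_n)_{n\ge1}$ be finite nonnegative integers and $\tilde Q=\|q_{i,n}\|$ ($i\in\{0,\dots,m_n\}$) with $q_{i,n}>0$, $\sum_{i}q_{i,n}=1$ for all $n$, and $\prod_n q_{i_n,n}=0$ for every digit sequence $(i_n)$. Put $a_{0,n}=0$, $a_{i,n}=\sum_{l<i}q_{l,n}$; $\Delta^{\tilde Q}_{j_1j_2\dots}=a_{j_1,1}+\sum_{n\ge2}a_{j_n,n}\prod_{l<n}q_{j_l,l}$. The nega-$\tilde Q$-representation $x=\Delta^{-\tilde Q}_{i_1i_2\dots}$ means $x=\Delta^{\tilde Q}_{i_1[m_2-i_2]i_3[m_4-i_4]\dots}$; every $x\in[0,1]$ has one (the formula gives the same value for both representations of a point that has two). Let $P=\|p_{i,n}\|$ have the same shape with $p_{i,n}\in(-1,1)$,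 $\sum_ip_{i,n}=1$, $\prod_n|p_{i_n,n}|=0$ for every digit sequence, $0<\sum_{i<c}p_{i,n}<1$ for $c\in\{1,\dots,m_n\}$. Put $\beta_{0,n}=0$, $\beta_{c,n}=\sum_{i<c}p_{i,n}$; for odd $n$: $\tilde p_{i,n}=p_{i,n}$, $\tilde\beta_{i,n}=\beta_{i,n}$; for even $n$: $\tilde p_{i,n}=p_{m_n-i,n}$, $\tilde\beta_{i,n}=\beta_{m_n-i,n}$. *)

From HB Require Import structures.
From mathcomp Require Import all_boot all_order all_algebra.
From mathcomp Require Import all_classical all_reals all_analysis.
Set Implicit Arguments. Unset Strict Implicit. Unset Printing Implicit Defensive.
Import Order.TTheory GRing.Theory Num.Theory.
Import numFieldNormedType.Exports.
Local Open Scope classical_set_scope.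
Local Open Scope ring_scope.

(* Conventions: all matrices are functions  (i n : nat) |-> entry  with the
   column index n starting at 1 (the value at n = 0 is irrelevant).
   Digit sequences are functions  d : nat -> nat  read from d 1 on. *)

Definition rseries_from {R : realType} (m : nat) (f : nat -> R) : R :=
  limn (fun N => \sum_(m <= k < N) f k).

Definition digit_seq (m : nat -> nat) (d : nat -> nat) : Prop :=
  forall n, (1 <= n)%N -> (d n <= m n)%N.

Definition inf_prod_zero {R : realType} (f : nat -> R) : Prop :=
  (fun N => \prod_(1 <= n < N) f n) @ \oo --> (0 : R).

(* a_{i,n} = sum_{l<i} q_{l,n}  (also used for beta_{i,n}) *)
Definition cumsum {R : realType} (q : nat -> nat -> R) (i n : nat) : R :=
  \sum_(l < i) q l n.

Definition DeltaQ {R : realType} (q : nat -> nat -> R) (d : nat -> nat) : R :=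
  cumsum q (d 1%N) 1%N +
  rseries_from 2 (fun n => cumsum q (d n) n * \prod_(1 <= l < n) q (d l) l).

(* digits of the Q-representation corresponding to a nega-Q-representation *)
Definition nega_digits (m : nat -> nat) (d : nat -> nat) : nat -> nat :=
  fun n => if odd n then d n else (m n - d n)%N.

Definition is_negaQ_rep {R : realType} (m : nat -> nat) (q : nat -> nat -> R)
  (d : nat -> nat) (x : R) : Prop :=
  digit_seq m d /\ x = DeltaQ q (nega_digits m d).

Definition ptilde {R : realType} (m : nat -> nat) (p : nat -> nat -> R) (i n : nat) : R :=
  if odd n then p i n else p (m n - i)%N n.
Definition betatilde {R : realType} (m : nat -> nat) (p : nat -> nat -> R) (i n : nat) : R :=
  if odd n then cumsum p i n else cumsum p (m n - i)%N n.

Definition Qtilde_matrix {R : realType} (m : nat -> nat) (q : nat -> nat -> R) : Prop :=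
  (forall n i, (1 <= n)%N -> (i <= m n)%N -> 0 < q i n) /\
  (forall n, (1 <= n)%N -> \sum_(i < (m n).+1) q i n = 1) /\
  (forall d, digit_seq m d -> inf_prod_zero (fun n => q (d n) n)).

Definition P_matrix {R : realType} (m : nat -> nat) (p : nat -> nat -> R) : Prop :=
  (forall n i, (1 <= n)%N -> (i <= m n)%N -> -1 < p i n < 1) /\
  (forall n, (1 <= n)%N -> \sum_(i < (m n).+1) p i n = 1) /\
  (forall d, digit_seq m d -> inf_prod_zero (fun n => `|p (d n) n|)) /\
  (forall n c, (1 <= n)%N -> (1 <= c <= m n)%N -> 0 < cumsum p c n < 1).

(* mutual independence of the nat-valued random variables xi_n, n >= 1
   (discrete sigma-algebra on nat: product rule for every finite family of
   indices and every choice of subsets of nat) *)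
Definition mutually_independent {d : measure_display} {T : measurableType d}
  {R : realType} (P : probability T R) (xi : nat -> T -> nat) : Prop :=
  forall (J : seq nat) (A : nat -> set nat),
    uniq J -> all (fun n => (0 < n)%N) J ->
    P [set w | forall n, n \in J -> A n (xi n w)] =
    (\prod_(n <- J) P [set w | A n (xi n w)])%E.

From HB Require Import structures.
From mathcomp Require Import all_boot all_order all_algebra.
From mathcomp Require Import all_classical all_reals all_analysis.
From mathcomp Require Import ring lra.
Import Order.TTheory GRing.Theory Num.Theory.
Import numFieldNormedType.Exports.
Local Open Scope classical_set_scope.
Local Open Scope ring_scope.
Set Implicit Arguments. Unset Strict Implicit. Unset Printing Implicit Defensive.

(* Put Q_K(d) = prod_{l<K} q_{d_l,l}, S_K(d) = sum_{k<K} a_{d_k,k} Q_k(d) and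
   C_K(d) = sum_{k<K} (1 - a_{d_k+1,k}) Q_k(d), the weight of the cylinders of
   rank k < K lying lexicographically above d.  Telescoping gives
   S_K + Q_K + C_K = 1, hence S_K(d) <= Delta^Q_d <= 1 - C_K(d) for all K.
   Consequently Delta^Q is nondecreasing for the lexicographic order, and strictly
   increasing unless the smaller sequence ends in maximal digits.  Up to the
   countable null set of such sequences, the event {eta < Delta^Q_j} is therefore
   the disjoint union over N of "the first N digits of eta are those of j and the
   next one is smaller", of probability beta_{j_{N+1},N+1} prod_{l<=N} p_{j_l,l};
   these sum to Delta^P_j.  A nega-Q-representation of x is a Q-representation
   with digits j = nega_digits i, which turns Delta^P_j into the stated series,
   and the all-maximal sequence gives Delta^Q = Delta^P = 1 at x = 1. *)

Section DigitExpansion.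
Variable R : realType.
Implicit Types (r : nat -> nat -> R) (d e : nat -> nat).

Definition prefix_prod r d K := \prod_(1 <= l < K) r (d l) l.
Definition partial_delta r d K :=
  \sum_(1 <= k < K) cumsum r (d k) k * prefix_prod r d k.
Definition upper_mass r d k := 1 - cumsum r (d k).+1 k.
Definition upper_weight r d K :=
  \sum_(1 <= k < K) upper_mass r d k * prefix_prod r d k.

Lemma cumsumS r i n : cumsum r i.+1 n = cumsum r i n + r i n.
Proof. by rewrite /cumsum big_ord_recr. Qed.

Lemma cumsum_nat r i n : cumsum r i n = \sum_(0 <= l < i) r l n.
Proof. by rewrite /cumsum big_mkord. Qed.

Lemma prefix_prodS r d K : (1 <= K)%N ->
  prefix_prod r d K.+1 = prefix_prod r d K * r (d K) K.
Proof. by move=> K1; rewrite /prefix_prod big_nat_recr. Qed.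

Lemma partial_deltaS r d K : (1 <= K)%N ->
  partial_delta r d K.+1 = partial_delta r d K + cumsum r (d K) K * prefix_prod r d K.
Proof. by move=> K1; rewrite /partial_delta big_nat_recr. Qed.

Lemma upper_weightS r d K : (1 <= K)%N ->
  upper_weight r d K.+1 = upper_weight r d K + upper_mass r d K * prefix_prod r d K.
Proof. by move=> K1; rewrite /upper_weight big_nat_recr. Qed.

Lemma partial_delta_telescope r d K :
  partial_delta r d K + prefix_prod r d K + upper_weight r d K = 1.
Proof.
elim: K => [|K IH].
  by rewrite /partial_delta /upper_weight /prefix_prod !big_geq // add0r addr0.
have [->|K1] := posnP K.
  by rewrite /partial_delta /upper_weight /prefix_prod !big_geq // add0r addr0.
rewrite partial_deltaS // prefix_prodS // upper_weightS // /upper_mass cumsumS.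
rewrite -[RHS]IH; ring.
Qed.

Lemma prefix_prod_eq r d e N : (forall l, (1 <= l < N)%N -> d l = e l) ->
  prefix_prod r d N = prefix_prod r e N.
Proof. by move=> de; apply: eq_big_nat => l /de ->. Qed.

Lemma upper_weight_eq r d e N : (forall l, (1 <= l < N)%N -> d l = e l) ->
  upper_weight r d N = upper_weight r e N.
Proof.
move=> de; apply: eq_big_nat => k /[dup] /de dek /andP[_ kN].
rewrite /upper_mass dek; congr (_ * _); apply: prefix_prod_eq => l /andP[l1 lk].
by apply: de; rewrite l1 (ltn_trans lk).
Qed.

Lemma DeltaQ_eq r d e : (forall n, (1 <= n)%N -> d n = e n) -> DeltaQ r d = DeltaQ r e.
Proof.
move=> de; rewrite /DeltaQ /rseries_from de //; congr (_ + limn _).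
apply/funext => N; apply: eq_big_nat => k /andP[k2 _].
rewrite de ?(ltnW k2) //; congr (_ * _); apply: eq_big_nat => l /andP[l1 _].
by rewrite de.
Qed.

Lemma nega_digit_seq m d : digit_seq m d -> digit_seq m (nega_digits m d).
Proof. by move=> hd n n1; rewrite /nega_digits; case: ifP => _; [exact: hd | exact: leq_subr]. Qed.

Lemma DeltaQ_nega_digits m r d :
  DeltaQ r (nega_digits m d) = cumsum r (d 1%N) 1%N +
    rseries_from 2 (fun n => betatilde m r (d n) n * \prod_(1 <= l < n) ptilde m r (d l) l).
Proof.
rewrite /DeltaQ; congr (_ + rseries_from _ _); apply/funext => n; congr (_ * _).
  by rewrite /betatilde /nega_digits; case: ifP.
by apply: eq_bigr => l _; rewrite /ptilde /nega_digits; case: ifP.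
Qed.
End DigitExpansion.

Definition stochastic (R : realType) (m : nat -> nat) (r : nat -> nat -> R) :=
  (forall n i, (1 <= n)%N -> (i <= m n)%N -> 0 <= r i n) /\
  (forall n, (1 <= n)%N -> \sum_(i < (m n).+1) r i n = 1).

Section Stochastic.
Variables (R : realType) (m : nat -> nat) (r : nat -> nat -> R).
Hypothesis r_stoch : stochastic m r.
Implicit Types (d e : nat -> nat).

Lemma cumsum_le i j n : (1 <= n)%N -> (i <= j <= (m n).+1)%N ->
  cumsum r i n <= cumsum r j n.
Proof.
move=> n1 /andP[ij jm]; rewrite !cumsum_nat (big_cat_nat (leq0n i) ij) //= lerDl.
rewrite big_nat_cond; apply: sumr_ge0 => l /andP[/andP[_ lj] _].
by apply: r_stoch.1 => //; rewrite -ltnS (leq_trans lj).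
Qed.

Lemma cumsum_ge0 i n : (1 <= n)%N -> (i <= (m n).+1)%N -> 0 <= cumsum r i n.
Proof. by move=> n1 im; have := @cumsum_le 0 i n n1 im; rewrite {1}/cumsum big_ord0. Qed.

Lemma cumsum_max n : (1 <= n)%N -> cumsum r (m n).+1 n = 1.
Proof. exact: r_stoch.2. Qed.

Lemma prefix_prod_ge0 d K : digit_seq m d -> 0 <= prefix_prod r d K.
Proof.
move=> hd; rewrite /prefix_prod big_nat_cond.
by apply: prodr_ge0 => l /andP[/andP[l1 _] _]; exact: r_stoch.1 (hd _ l1).
Qed.

Lemma upper_mass_ge0 d k : digit_seq m d -> (1 <= k)%N -> 0 <= upper_mass r d k.
Proof.
move=> hd k1; rewrite subr_ge0 -(cumsum_max k1).
by apply: cumsum_le => //; rewrite ltnS hd // leqnn.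
Qed.

Lemma partial_delta_nondecreasing d : digit_seq m d ->
  nondecreasing_seq (partial_delta r d).
Proof.
move=> hd; apply: nondecreasing_series => k k1 _.
by apply: mulr_ge0; [apply: cumsum_ge0 => //; exact: leqW (hd k k1) | exact: prefix_prod_ge0].
Qed.

Lemma upper_weight_nondecreasing d : digit_seq m d ->
  nondecreasing_seq (upper_weight r d).
Proof.
move=> hd; apply: nondecreasing_series => k k1 _.
by apply: mulr_ge0; [exact: upper_mass_ge0 | exact: prefix_prod_ge0].
Qed.

Lemma upper_weight_ge0 d K : digit_seq m d -> 0 <= upper_weight r d K.
Proof.
move=> hd; apply: le_trans (upper_weight_nondecreasing hd (leq0n K)).
by rewrite /upper_weight big_geq.
Qed.

Lemma partial_delta_le d K : digit_seq m d ->
  partial_delta r d K <= 1 - upper_weight r d K.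
Proof.
by move=> hd; have := partial_delta_telescope r d K; have := prefix_prod_ge0 K hd; lra.
Qed.

Lemma partial_delta_cvg d : digit_seq m d -> partial_delta r d @ \oo --> DeltaQ r d.
Proof.
move=> hd; set a1 := cumsum r (d 1%N) 1%N.
set T := fun K => \sum_(2 <= k < K) cumsum r (d k) k * prefix_prod r d k.
have deltaE K : partial_delta r d K.+2 = a1 + T K.+2.
  by rewrite /partial_delta big_ltn // /prefix_prod big_geq // mulr1.
have T_nd : nondecreasing_seq T.
  apply: nondecreasing_series => k k2 _; apply: mulr_ge0; last exact: prefix_prod_ge0.
  by apply: cumsum_ge0; [exact: ltnW | exact: leqW (hd k (ltnW k2))].
have T_cvg : cvgn T.
  apply: nondecreasing_is_cvgn => //; exists 1 => _ [K _ <-].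
  apply: le_trans (T_nd _ _ (leqW (leqnSn K))) _.
  have a1_ge0 : 0 <= a1 by apply: cumsum_ge0 => //; exact: leqW (hd 1%N isT).
  have := partial_delta_le K.+2 hd; have := upper_weight_ge0 K.+2 hd.
  rewrite deltaE; lra.
rewrite -(cvg_shiftn 2).
have -> : (fun n => partial_delta r d (n + 2)) = (fun n => a1 + T (n + 2)%N).
  by apply/funext => n; rewrite addn2 deltaE.
have : (fun n => a1 + T (n + 2)%N) @ \oo --> a1 + limn T.
  by apply: cvgD; [exact: cvg_cst | rewrite (cvg_shiftn 2 T)].
exact.
Qed.

Lemma partial_delta_le_DeltaQ d K : digit_seq m d -> partial_delta r d K <= DeltaQ r d.
Proof.
move=> hd; rewrite -(cvg_lim _ (partial_delta_cvg hd)) //.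
apply: nondecreasing_cvgn_le; first exact: partial_delta_nondecreasing.
by apply/cvg_ex; eexists; exact: partial_delta_cvg.
Qed.

Lemma DeltaQ_le_upper_weight d K : digit_seq m d ->
  DeltaQ r d <= 1 - upper_weight r d K.
Proof.
move=> hd; rewrite -(cvg_lim _ (partial_delta_cvg hd)) //.
apply: limr_le; first by apply/cvg_ex; eexists; exact: partial_delta_cvg.
near=> K'; apply: le_trans (partial_delta_le K' hd) _.
rewrite lerD2l lerN2; apply: upper_weight_nondecreasing => //.
near: K'; exact: nbhs_infty_ge.
Unshelve. all: end_near.
Qed.

Lemma DeltaQ_ge0 d : digit_seq m d -> 0 <= DeltaQ r d.
Proof.
by move=> hd; apply: le_trans (partial_delta_le_DeltaQ 0 hd); rewrite /partial_delta big_geq.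
Qed.

Lemma DeltaQ_le1 d : digit_seq m d -> DeltaQ r d <= 1.
Proof.
by move=> hd; apply: le_trans (DeltaQ_le_upper_weight 0 hd) _; rewrite /upper_weight big_geq ?subr0.
Qed.

Lemma prefix_prod_cvg0 d : digit_seq m d ->
  inf_prod_zero (fun n => `|r (d n) n|) -> prefix_prod r d @ \oo --> 0.
Proof.
move=> hd; rewrite /inf_prod_zero.
suff -> : (fun N => \prod_(1 <= n < N) `|r (d n) n|) = prefix_prod r d by [].
apply/funext => N; apply: eq_big_nat => n /andP[n1 _].
by rewrite ger0_norm //; exact: r_stoch.1 (hd _ n1).
Qed.

Lemma DeltaQ_max : prefix_prod r m @ \oo --> 0 -> DeltaQ r m = 1.
Proof.
move=> prod0.
have upper0 K : upper_weight r m K = 0.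
  rewrite /upper_weight big_nat_cond big1 // => k /andP[/andP[k1 _] _].
  by rewrite /upper_mass cumsum_max // subrr mul0r.
have deltaE : partial_delta r m = fun K => 1 - prefix_prod r m K.
  by apply/funext => K; have := partial_delta_telescope r m K; rewrite upper0; lra.
have hm : digit_seq m m by [].
rewrite -(cvg_lim _ (partial_delta_cvg hm)) // deltaE; apply: cvg_lim => //.
by rewrite -[X in _ --> X]subr0; apply: cvgB; [exact: cvg_cst | exact: prod0].
Qed.

Lemma lex_lt_upper_weight_le d e N : digit_seq m d -> digit_seq m e -> (1 <= N)%N ->
  (forall l, (1 <= l < N)%N -> d l = e l) -> (d N < e N)%N ->
  1 - upper_weight r d N.+1 <= partial_delta r e N.+1.
Proof.
move=> hd he N1 de dN; have := partial_delta_telescope r e N.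
rewrite upper_weightS // partial_deltaS // /upper_mass.
rewrite (upper_weight_eq r de) (prefix_prod_eq r de).
have : cumsum r (d N).+1 N * prefix_prod r e N <= cumsum r (e N) N * prefix_prod r e N.
  apply: ler_wpM2r; first exact: (prefix_prod_ge0 N he).
  by apply: cumsum_le => //; rewrite dN; exact: leqW (he N N1).
lra.
Qed.

Lemma DeltaQ_lex_le d e N : digit_seq m d -> digit_seq m e -> (1 <= N)%N ->
  (forall l, (1 <= l < N)%N -> d l = e l) -> (d N < e N)%N -> DeltaQ r d <= DeltaQ r e.
Proof.
move=> hd he N1 de dN; apply: le_trans (DeltaQ_le_upper_weight N.+1 hd) _.
exact: le_trans (lex_lt_upper_weight_le hd he N1 de dN) (partial_delta_le_DeltaQ N.+1 he).
Qed.
End Stochastic.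

Section Lexicographic.
Variables (R : realType) (m : nat -> nat) (q : nat -> nat -> R).
Hypothesis q_stoch : stochastic m q.
Hypothesis q_gt0 : forall n i, (1 <= n)%N -> (i <= m n)%N -> 0 < q i n.
Implicit Types (d e : nat -> nat).

Lemma prefix_prod_gt0 d K : digit_seq m d -> 0 < prefix_prod q d K.
Proof.
move=> hd; rewrite /prefix_prod big_nat_cond.
by apply: prodr_gt0 => l /andP[/andP[l1 _] _]; exact: q_gt0 (hd _ l1).
Qed.

Lemma upper_mass_gt0 d k : digit_seq m d -> (1 <= k)%N -> (d k < m k)%N ->
  0 < upper_mass q d k.
Proof.
move=> hd k1 dk; rewrite subr_gt0 -(cumsum_max q_stoch k1) (cumsumS q (m k)).
have : cumsum q (d k).+1 k <= cumsum q (m k) k.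
  by apply: (cumsum_le q_stoch) => //; rewrite dk leqnSn.
by have := q_gt0 k1 (leqnn (m k)); lra.
Qed.

Lemma DeltaQ_lt_upper_weight d k : digit_seq m d -> (1 <= k)%N -> (d k < m k)%N ->
  DeltaQ q d < 1 - upper_weight q d k.
Proof.
move=> hd k1 dk; apply: le_lt_trans (DeltaQ_le_upper_weight q_stoch k.+1 hd) _.
rewrite upper_weightS // ltrD2l ltrN2 ltrDl.
exact: mulr_gt0 (upper_mass_gt0 hd k1 dk) (prefix_prod_gt0 k hd).
Qed.

Lemma DeltaQ_lex_ge_tail_max d e N : digit_seq m d -> digit_seq m e -> (1 <= N)%N ->
  (forall l, (1 <= l < N)%N -> d l = e l) -> (d N < e N)%N ->
  DeltaQ q e <= DeltaQ q d -> forall k, (N < k)%N -> d k = m k.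
Proof.
move=> hd he N1 de dN ed k Nk; have k1 : (1 <= k)%N := leq_trans N1 (ltnW Nk).
apply/eqP; rewrite eqn_leq hd //= leqNgt; apply/negP => dk.
have := DeltaQ_lt_upper_weight hd k1 dk.
have := upper_weight_nondecreasing q_stoch hd Nk.
have := lex_lt_upper_weight_le q_stoch hd he N1 de dN.
have := partial_delta_le_DeltaQ q_stoch N.+1 he.
lra.
Qed.
End Lexicographic.

Section Cylinders.
Variables (R : realType) (m : nat -> nat) (p : nat -> nat -> R).
Variables (dm : measure_display) (T : measurableType dm).
Variables (P : probability T R) (xi : nat -> T -> nat).
Hypothesis p_prod0 : forall e, digit_seq m e -> prefix_prod p e @ \oo --> 0.
Hypothesis xi_meas : forall n (A : set nat), measurable [set w | A (xi n w)].
Hypothesis xi_law : forall n i, (1 <= n)%N -> (i <= m n)%N ->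
  P [set w | xi n w = i] = (p i n)%:E.
Hypothesis xi_indep : mutually_independent P xi.

Lemma measurable_digits (A : nat -> set nat) :
  measurable [set w | forall n, A n (xi n w)].
Proof.
have -> : [set w | forall n, A n (xi n w)] = \bigcap_n [set w | A n (xi n w)].
  by apply/seteqP; split => w /= h; [move=> n _; exact: h | move=> n; exact: h n I].
by apply: bigcapT_measurable => n; exact: xi_meas.
Qed.

Lemma prob_prefix K (A : nat -> set nat) :
  P [set w | forall n, n \in index_iota 1 K -> A n (xi n w)] =
  (\prod_(1 <= n < K) P [set w | A n (xi n w)])%E.
Proof.
apply: xi_indep; first exact: iota_uniq.
by apply/allP => n; rewrite mem_index_iota => /andP[].
Qed.

Lemma prob_digit_lt n c : (1 <= n)%N -> (c <= (m n).+1)%N ->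
  P [set w | (xi n w < c)%N] = (cumsum p c n)%:E.
Proof.
move=> n1; elim: c => [_|c IH cm].
  have -> : [set w | (xi n w < 0)%N] = set0 by apply/seteqP; split => w.
  by rewrite measure0 /cumsum big_ord0.
have -> : [set w | (xi n w < c.+1)%N] = [set w | (xi n w < c)%N] `|` [set w | xi n w = c].
  apply/seteqP; split => w /=; first by rewrite ltnS leq_eqVlt => /orP[/eqP|]; [right|left].
  by case=> [/ltnW|->] //; rewrite ltnS.
rewrite measureU.
- by rewrite cumsumS EFinD; congr (_ + _)%E; [exact: IH (ltnW cm) | exact: xi_law].
- exact: (xi_meas n (fun k => (k < c)%N)).
- exact: (xi_meas n (fun k => k = c)).
by apply/seteqP; split => w // [/= h1 h2]; move: h1; rewrite h2 ltnn.
Qed.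

Definition cylinder (e : nat -> nat) := [set w | forall n, (1 <= n)%N -> xi n w = e n].

Lemma measurable_cylinder e : measurable (cylinder e).
Proof. exact: (measurable_digits (fun n k => (1 <= n)%N -> k = e n)). Qed.

Lemma prob_cylinder e : digit_seq m e -> P (cylinder e) = 0%E.
Proof.
move=> he.
have le_prod K : (P (cylinder e) <= (prefix_prod p e K)%:E)%E.
  pose A n : set nat := [set e n].
  apply: (@le_trans _ _ (P [set w | forall n, n \in index_iota 1 K -> A n (xi n w)])).
    apply: le_measure; rewrite ?inE; first exact: measurable_cylinder.
      exact: (measurable_digits (fun n k => n \in index_iota 1 K -> A n k)).
    by move=> w hw n; rewrite mem_index_iota => /andP[n1 _]; exact: hw.
  rewrite prob_prefix /prefix_prod -prodEFin le_eqVlt; apply/orP; left; apply/eqP.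
  by apply: eq_big_nat => n /andP[n1 _]; exact: xi_law (he _ n1).
have le1 := le_prod 0%N; rewrite /prefix_prod big_geq // in le1.
have ge0 : (0 <= P (cylinder e))%E by exact: measure_ge0.
move: ge0 le1 le_prod; case: (P (cylinder e)) => // u.
rewrite !lee_fin => u_ge0 _ le_prod; apply/eqP; rewrite eqe eq_le u_ge0 andbT.
rewrite -(cvg_lim _ (p_prod0 he)) //.
apply: limr_ge; first by apply/cvg_ex; eexists; exact: p_prod0.
by near=> K; rewrite -lee_fin; exact: le_prod.
Unshelve. all: end_near.
Qed.
End Cylinders.

Section Distribution.
Variables (R : realType) (m : nat -> nat) (q p : nat -> nat -> R).
Variables (dm : measure_display) (T : measurableType dm).
Variables (P : probability T R) (xi : nat -> T -> nat).
Hypothesis q_stoch : stochastic m q.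
Hypothesis q_gt0 : forall n i, (1 <= n)%N -> (i <= m n)%N -> 0 < q i n.
Hypothesis p_stoch : stochastic m p.
Hypothesis p_prod0 : forall e, digit_seq m e -> prefix_prod p e @ \oo --> 0.
Hypothesis xi_meas : forall n (A : set nat), measurable [set w | A (xi n w)].
Hypothesis xi_digit : forall n w, (1 <= n)%N -> (xi n w <= m n)%N.
Hypothesis xi_law : forall n i, (1 <= n)%N -> (i <= m n)%N ->
  P [set w | xi n w = i] = (p i n)%:E.
Hypothesis xi_indep : mutually_independent P xi.

Definition digits w n := xi n w.

Lemma digit_seq_digits w : digit_seq m (digits w).
Proof. by move=> n n1; exact: xi_digit. Qed.

Variable j : nat -> nat.
Hypothesis j_digit : digit_seq m j.

Definition lex_below := [set w | DeltaQ q (digits w) < DeltaQ q j].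

Definition first_below N :=
  [set w | (forall l, (1 <= l <= N)%N -> xi l w = j l) /\ (xi N.+1 w < j N.+1)%N].

Definition first_below_digit N n : set nat :=
  if (n <= N)%N then [set j n] else [set k | (k < j N.+1)%N].

Lemma first_belowE N : first_below N =
  [set w | forall n, n \in index_iota 1 N.+2 -> first_below_digit N n (xi n w)].
Proof.
apply/seteqP; split => w /=.
  move=> [agree lt] n; rewrite mem_index_iota /first_below_digit => /andP[n1 n2].
  case: ifP => nN; first by apply: agree; rewrite n1 nN.
  by have -> : n = N.+1 by apply/eqP; rewrite eqn_leq -ltnS n2 ltnNge nN.
move=> h; split.
  move=> l /andP[l1 lN]; have := h l; rewrite /first_below_digit lN mem_index_iota l1 /=.
  by apply; rewrite ltnS; exact: leqW.
by have := h N.+1; rewrite /first_below_digit ltnn mem_index_iota /=; apply.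
Qed.

Lemma measurable_first_below N : measurable (first_below N).
Proof.
rewrite first_belowE; apply: (measurable_digits xi_meas
  (fun n k => n \in index_iota 1 N.+2 -> first_below_digit N n k)).
Qed.

Lemma prob_first_below N :
  P (first_below N) = (cumsum p (j N.+1) N.+1 * prefix_prod p j N.+1)%:E.
Proof.
rewrite first_belowE (prob_prefix xi_indep N.+2 (first_below_digit N)) big_nat_recr //=.
rewrite mulrC EFinM; congr (_ * _)%E.
  rewrite /prefix_prod -prodEFin; apply: eq_big_nat => n /andP[n1 nN].
  by rewrite /first_below_digit -ltnS nN; apply: xi_law => //; exact: j_digit.
rewrite /first_below_digit ltnn; apply: (prob_digit_lt xi_meas xi_law) => //.
by apply: leqW; apply: j_digit.
Qed.

Lemma trivIset_first_below : trivIset setT first_below.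
Proof.
move=> a b _ _ [w [[a_eq a_lt] [b_eq b_lt]]].
case: (ltngtP a b) => // ab; exfalso.
  by move: a_lt; rewrite b_eq ?ltnn // ab.
by move: b_lt; rewrite a_eq ?ltnn // ab.
Qed.

Lemma lex_below_sub : lex_below `<=` \bigcup_N first_below N.
Proof.
move=> w lt_wj.
have ex : exists n, (1 <= n)%N && (xi n w != j n).
  apply: contrapT => nex; move: lt_wj.
  rewrite /lex_below /= (DeltaQ_eq q (d:=digits w) (e:=j)) ?ltxx //.
  move=> n n1; rewrite /digits; case: (eqVneq (xi n w) (j n)) => // ne.
  by case: nex; exists n; rewrite n1 ne.
case: (ex_minnP ex) => n /andP[n1 ne] n_min.
have [N nE] : exists N, n = N.+1 by exists n.-1; rewrite prednK.
subst n.
have agree l : (1 <= l <= N)%N -> xi l w = j l.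
  move=> /andP[l1 lN]; case: (eqVneq (xi l w) (j l)) => // ne'; exfalso.
  by have := n_min l; rewrite l1 ne' /= => /(_ isT); rewrite ltnNge lN.
case: (ltngtP (xi N.+1 w) (j N.+1)) => [lt|gt|eq].
- by exists N => //; split.
- have de l : (1 <= l < N.+1)%N -> j l = digits w l.
    by move=> /andP[l1 lN]; rewrite /digits agree // l1 -ltnS.
  have := DeltaQ_lex_le q_stoch j_digit (digit_seq_digits w) (ltn0Sn N) de gt.
  by rewrite leNgt lt_wj.
- by move: ne; rewrite eq eqxx.
Qed.

(* [minn] keeps the sequence admissible while [r] ranges over all of [nat]. *)
Definition tail_max N r n :=
  if (n <= N)%N then j n else if n == N.+1 then minn r (m n) else m n.

Lemma digit_seq_tail_max N r : digit_seq m (tail_max N r).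
Proof.
move=> n n1; rewrite /tail_max; case: ifP => _; first exact: j_digit.
by case: eqP => _; [exact: geq_minr | exact: leqnn].
Qed.

Definition exceptional := \bigcup_N \bigcup_r cylinder xi (tail_max N r).

Lemma measurable_exceptional : measurable exceptional.
Proof.
apply: bigcupT_measurable => N; apply: bigcupT_measurable => r.
exact: measurable_cylinder.
Qed.

Lemma prob_exceptional : P exceptional = 0%E.
Proof.
apply/(negligibleP _ measurable_exceptional).
apply: negligible_bigcup => N; apply: negligible_bigcup => r.
apply/(negligibleP _ (measurable_cylinder xi_meas _)).
exact: (prob_cylinder p_prod0 xi_meas xi_law xi_indep (digit_seq_tail_max N r)).
Qed.

Lemma first_below_sub : \bigcup_N first_below N `<=` lex_below `|` exceptional.
Proof.
move=> w [N _ [agree lt]].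
case: (boolP (DeltaQ q (digits w) < DeltaQ q j)) => [|ge]; [by left | right].
rewrite -leNgt in ge.
have de l : (1 <= l < N.+1)%N -> digits w l = j l.
  by move=> /andP[l1 lN]; apply: agree; rewrite l1 -ltnS.
have tail := DeltaQ_lex_ge_tail_max q_stoch q_gt0 (digit_seq_digits w) j_digit
  (ltn0Sn N) de lt ge.
exists N => //; exists (xi N.+1 w) => // n n1.
rewrite /tail_max; case: ifP => nN; first by apply: agree; rewrite n1 nN.
case: eqP => [->|ne]; first by symmetry; apply/minn_idPl; exact: xi_digit.
by apply: tail; rewrite ltn_neqAle ltnNge nN andbT eq_sym; apply/eqP.
Qed.

Lemma measurable_lex_below_cylinder e : measurable (lex_below `&` cylinder xi e).
Proof.
have [lt|ge] := pselect (DeltaQ q e < DeltaQ q j).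
  rewrite (_ : _ `&` _ = cylinder xi e); first exact: measurable_cylinder.
  apply/seteqP; split => [w []//|w hw]; split => //.
  by rewrite /lex_below /= (DeltaQ_eq q hw).
rewrite (_ : _ `&` _ = set0); first exact: measurable0.
apply/seteqP; split => // w [lt_w hw]; apply: ge.
by move: lt_w; rewrite /lex_below /= (DeltaQ_eq q hw).
Qed.

Lemma measurable_lex_below : measurable lex_below.
Proof.
have -> : lex_below = ((\bigcup_N first_below N) `\` exceptional) `|`
    \bigcup_N \bigcup_r (lex_below `&` cylinder xi (tail_max N r)).
  apply/seteqP; split => w.
    move=> hw; have [[N _ [r _ hr]]|nexc] := pselect (exceptional w).
      by right; exists N => //; exists r.
    by left; split => //; exact: lex_below_sub.
  case=> [[hB nexc]|[N _ [r _ []]]] //.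
  by case: (first_below_sub hB).
apply: measurableU.
  apply: measurableD; last exact: measurable_exceptional.
  by apply: bigcupT_measurable => N; exact: measurable_first_below.
apply: bigcupT_measurable => N; apply: bigcupT_measurable => r.
exact: measurable_lex_below_cylinder.
Qed.

Lemma prob_bigcup_first_below : P (\bigcup_N first_below N) = (DeltaQ p j)%:E.
Proof.
have mB : measurable (\bigcup_N first_below N).
  by apply: bigcupT_measurable => N; exact: measurable_first_below.
rewrite (measure_semi_bigcup P measurable_first_below trivIset_first_below mB).
rewrite (eq_eseriesr (fun N _ => prob_first_below N)).
have cv : (fun K => partial_delta p j K.+1) @ \oo --> DeltaQ p j.
  by rewrite (cvg_shiftS (partial_delta p j)); exact: (partial_delta_cvg p_stoch j_digit).
rewrite -(cvg_lim _ cv) // -EFin_lim; last by apply/cvg_ex; eexists; exact: cv.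
congr (limn _); apply/funext => K; by rewrite /= sumEFin /partial_delta big_add1.
Qed.

Lemma prob_lex_below : P lex_below = (DeltaQ p j)%:E.
Proof.
have mB : measurable (\bigcup_N first_below N).
  by apply: bigcupT_measurable => N; exact: measurable_first_below.
rewrite -prob_bigcup_first_below; apply/eqP; rewrite eq_le; apply/andP; split.
  apply: le_measure; rewrite ?inE //; [exact: measurable_lex_below | exact: lex_below_sub].
apply: (@le_trans _ _ (P (lex_below `|` exceptional))).
  apply: le_measure; rewrite ?inE //; last exact: first_below_sub.
  exact: measurableU measurable_lex_below measurable_exceptional.
have : (P (lex_below `|` exceptional) <= P lex_below + P exceptional)%E.
  exact: (measureU2 P measurable_lex_below measurable_exceptional).
by rewrite prob_exceptional adde0.
Qed.
End Distribution.


(* Otherwise [R] would become implicit in [mainTheorem10]. *)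
Unset Implicit Arguments.

Theorem mainTheorem10 (R : realType) (m : nat -> nat) (q p : nat -> nat -> R)
  (d : measure_display) (T : measurableType d) (P : probability T R)
  (xi : nat -> T -> nat) :
  Qtilde_matrix m q ->
  P_matrix m p ->
  (forall n i, (1 <= n)%N -> (i <= m n)%N -> 0 <= p i n) ->
  (forall n (A : set nat), measurable [set w | A (xi n w)]) ->
  (forall n w, (1 <= n)%N -> (xi n w <= m n)%N) ->
  (forall n i, (1 <= n)%N -> (i <= m n)%N -> P [set w | xi n w = i] = (p i n)%:E) ->
  mutually_independent P xi ->
  let eta := fun w => DeltaQ q (fun n => xi n w) in
  let F := fun x : R => P [set w | eta w < x] in
  (forall x : R, x < 0 -> F x = 0%E) /\
  (forall (x : R) (i : nat -> nat), 0 <= x < 1 -> is_negaQ_rep m q i x ->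
     F x = (cumsum p (i 1%N) 1%N +
            rseries_from 2 (fun n => betatilde m p (i n) n *
                                     \prod_(1 <= j < n) ptilde m p (i j) j))%:E) /\
  (forall x : R, 1 <= x -> F x = 1%E).
Proof.
move=> [q_gt0 [q_sum q_prod0]] [_ [p_sum [p_norm_prod0 _]]] p_ge0 xi_meas xi_digit
  xi_law xi_indep eta F.
have q_stoch : stochastic m q by split=> // n i n1 im; exact/ltW/q_gt0.
have p_stoch : stochastic m p by [].
have p_prod0 e : digit_seq m e -> prefix_prod p e @ \oo --> 0.
  by move=> he; exact: (prefix_prod_cvg0 p_stoch he (p_norm_prod0 e he)).
have eta_bounds w : 0 <= eta w <= 1.
  have w_digit := digit_seq_digits xi_digit w.
  by rewrite (DeltaQ_ge0 q_stoch w_digit) (DeltaQ_le1 q_stoch w_digit).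
have F_DeltaQ j : digit_seq m j -> F (DeltaQ q j) = (DeltaQ p j)%:E.
  exact: (prob_lex_below q_stoch q_gt0 p_stoch p_prod0 xi_meas xi_digit xi_law xi_indep).
have m_digit : digit_seq m m by [].
split; [|split].
- move=> x x_lt0; rewrite /F [X in P X](_ : _ = set0) ?measure0 //.
  by apply/seteqP; split=> w //= lt_wx; have := eta_bounds w; lra.
- move=> x i _ [i_digit ->].
  by rewrite F_DeltaQ ?DeltaQ_nega_digits //; exact: nega_digit_seq.
- move=> x; rewrite le_eqVlt => /predU1P[<-|x_gt1].
    rewrite -{1}(DeltaQ_max q_stoch (q_prod0 m m_digit)) F_DeltaQ //.
    by rewrite (DeltaQ_max p_stoch (p_prod0 m m_digit)).
  rewrite /F [X in P X](_ : _ = setT) ?probability_setT //.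
  by apply/seteqP; split=> w //= _; have := eta_bounds w; lra.
Qed.
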